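(* A ring $R$ is 2-primal if and only if $\beta(R)=E_R(0)$.
   Context: Rings are associative with identity. $\beta(R)$ is the prime radical of $R$ (intersection of all prime ideals). $R$ is 2-primal if the set $\mathcal N(R)$ of nilpotent elements of $R$ equals $\beta(R)$. $E_R(0)=\{ab : a,b\in R,\ a^kb=0 \text{ for some } k\in\mathbb N\}$ (the envelope of the zero submodule of the left module ${}_RR$). *)

From mathcomp Require Import all_boot all_algebra.
Set Implicit Arguments. Unset Strict Implicit. Unset Printing Implicit Defensive.
Import GRing.Theory.
Local Open Scope ring_scope.

(* Rings: associative with identity, not necessarily commutative (pzRingType; the zero ring is allowed). *)

Definition is_ideal (R : pzRingType) (I : R -> Prop) : Prop :=
  [/\ I 0,
      (forall x y, I x -> I y -> I (x + y)),
      (forall x, I x -> I (- x)),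
      (forall r x, I x -> I (r * x)) &
      (forall r x, I x -> I (x * r))].

Definition is_prime_ideal (R : pzRingType) (P : R -> Prop) : Prop :=
  [/\ is_ideal P,
      ~ P 1 &
      (forall a b, (forall r, P (a * r * b)) -> P a \/ P b)].

Definition prime_radical (R : pzRingType) (x : R) : Prop :=
  forall P : R -> Prop, is_prime_ideal P -> P x.

Definition nilpotent_elt (R : pzRingType) (x : R) : Prop :=
  exists n : nat, x ^+ n = 0.

Definition two_primal (R : pzRingType) : Prop :=
  forall x : R, nilpotent_elt x <-> prime_radical x.

Definition envelope_zero (R : pzRingType) (x : R) : Prop :=
  exists a b : R, x = a * b /\ exists k : nat, a ^+ k * b = 0.

From mathcomp Require Import all_boot all_algebra.
From mathcomp Require Import boolp classical_sets.

(* One always has [beta(R) ⊆ N(R) ⊆ E_R(0)]: an ideal maximal among those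
   avoiding the powers of a non-nilpotent [x] is prime, and [x = x * 1] with
   [x^k * 1 = 0].  So [beta(R) = E_R(0)] forces [beta(R) = N(R)].
   Conversely, if [beta(R) = N(R)] then [beta(R)] is completely semiprime
   ([y^2 ∈ beta(R)] implies [y ∈ beta(R)]), and in a completely semiprime ideal
   [a^(j+2) b ∈ I] implies [a^(j+1) b ∈ I]; descending from [a^k b = 0] gives
   [ab ∈ beta(R)]. *)

Set Implicit Arguments. Unset Strict Implicit. Unset Printing Implicit Defensive.
Import GRing.Theory.
Local Open Scope ring_scope.
Local Open Scope classical_set_scope.

Section IdealAdjoin.
Variable R : pzRingType.

Definition ideal_adjoin (A : set R) (a : R) : set R :=
  fun y => forall I, is_ideal I -> A `<=` I -> I a -> I y.

Lemma ideal_adjoin_ideal A a : is_ideal (ideal_adjoin A a).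
Proof.
split=> [I [] //|u v hu hv|u hu|r u hu|r u hu] I hI AI Ia;
  case: (hI) => _ hD hN hL hR.
- exact: hD (hu _ hI AI Ia) (hv _ hI AI Ia).
- exact: hN (hu _ hI AI Ia).
- exact: hL (hu _ hI AI Ia).
- exact: hR (hu _ hI AI Ia).
Qed.

Lemma sub_ideal_adjoin A a : A `<=` ideal_adjoin A a.
Proof. by move=> z Az I _ AI _; apply: AI. Qed.

Lemma ideal_adjoin_elem A a : ideal_adjoin A a a.
Proof. by move=> I. Qed.

Lemma ideal_adjoin_sandwichl A a v : is_ideal A ->
  (forall r, A (a * r * v)) ->
  forall u, ideal_adjoin A a u -> forall r, A (u * r * v).
Proof.
case=> A0 AD AN AL AR harv u /(_ (fun u => forall r, A (u * r * v))); apply;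
  last exact: harv.
- split=> [r|u1 u2 h1 h2 r|u1 h1 r|s u1 h1 r|s u1 h1 r].
  + by rewrite !mul0r.
  + by rewrite mulrDl mulrDl; apply: AD.
  + by rewrite !mulNr; apply: AN.
  + by rewrite -!mulrA; apply: AL; rewrite !mulrA.
  + by rewrite -(mulrA u1); apply: h1.
- by move=> z Az r; apply/AR/AR.
Qed.

Lemma ideal_adjoin_sandwichr A b u : is_ideal A ->
  (forall r, A (u * r * b)) ->
  forall v, ideal_adjoin A b v -> forall r, A (u * r * v).
Proof.
case=> A0 AD AN AL AR hurb v /(_ (fun v => forall r, A (u * r * v))); apply;
  last exact: hurb.
- split=> [r|v1 v2 h1 h2 r|v1 h1 r|s v1 h1 r|s v1 h1 r].
  + by rewrite mulr0.
  + by rewrite mulrDr; apply: AD.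
  + by rewrite mulrN; apply: AN.
  + by rewrite mulrA -(mulrA u); apply: h1.
  + by rewrite mulrA; apply: AR.
- by move=> z Az r; apply: AL.
Qed.

Lemma mul_ideal_adjoin A a b : is_ideal A -> (forall r, A (a * r * b)) ->
  forall u v, ideal_adjoin A a u -> ideal_adjoin A b v -> A (u * v).
Proof.
move=> hA hab u v hu hv; rewrite -[u]mulr1.
apply: (ideal_adjoin_sandwichr hA _ hv).
exact: (ideal_adjoin_sandwichl hA hab hu).
Qed.

End IdealAdjoin.

Section AvoidingIdeal.
Variables (R : pzRingType) (x : R).

Definition avoiding_ideal (A : set R) : Prop :=
  [/\ (forall u v, A u -> A v -> A (u + v)),
      (forall u, A u -> A (- u)),
      (forall r u, A u -> A (r * u)),
      (forall r u, A u -> A (u * r)) &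
      (forall n, ~ A (x ^+ n))].

Lemma avoiding_ideal_bigcup (F : set (set R)) :
  F `<=` avoiding_ideal -> total_on F subset ->
  avoiding_ideal (\bigcup_(X in F) X).
Proof.
move=> Favoid Ftot; split.
- move=> u v [X FX Xu] [Y FY Yv].
  have [XY|YX] := Ftot X Y FX FY.
  + by exists Y => //; case: (Favoid Y FY) => + _ _ _ _; apply; first exact: XY.
  + by exists X => //; case: (Favoid X FX) => + _ _ _ _; apply; last exact: YX.
- by move=> u [X FX Xu]; exists X => //; case: (Favoid X FX) => _ + _ _ _; apply.
- by move=> r u [X FX Xu]; exists X => //; case: (Favoid X FX) => _ _ + _ _; apply.
- by move=> r u [X FX Xu]; exists X => //; case: (Favoid X FX) => _ _ _ + _; apply.
- by move=> n [X FX Xn]; have [_ _ _ _ Xx] := Favoid X FX; exact: Xx Xn.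
Qed.

Lemma ex_maximal_avoiding_ideal :
  exists A, avoiding_ideal A /\ forall B, A `<` B -> ~ avoiding_ideal B.
Proof. exact: Zorn_bigcup avoiding_ideal_bigcup. Qed.

Variable A : set R.
Hypothesis (avoidA : avoiding_ideal A)
           (maxA : forall B, A `<` B -> ~ avoiding_ideal B)
           (x_nnil : ~ nilpotent_elt x).

Lemma maximal_avoiding_ideal0 : A 0.
Proof.
apply: contrapT => nA0; apply: (maxA (B := A `|` [set 0])).
  by split=> [z Az|/(_ 0 (or_intror erefl))]; [left|].
have [AD AN AL AR Ax] := avoidA.
split.
- by move=> u v [hu|->] [hv|->]; rewrite ?addr0 ?add0r;
    [left; apply: AD|left|left|right].
- by move=> u [hu|->]; [left; apply: AN|right; rewrite oppr0].
- by move=> r u [hu|->]; [left; apply: AL|right; rewrite mulr0].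
- by move=> r u [hu|->]; [left; apply: AR|right; rewrite mul0r].
- by move=> n [/Ax|xn0] //; apply: x_nnil; exists n.
Qed.

Lemma maximal_avoiding_ideal_ideal : is_ideal A.
Proof. by have [? ? ? ? _] := avoidA; split=> //; exact: maximal_avoiding_ideal0. Qed.

Lemma ideal_adjoin_meets_powers c : ~ A c -> exists n, ideal_adjoin A c (x ^+ n).
Proof.
move=> nAc; apply: contrapT => noxn.
have [G0 GD GN GL GR] := ideal_adjoin_ideal A c.
apply: (maxA (B := ideal_adjoin A c)).
  split; first exact: sub_ideal_adjoin.
  by move=> adjA; apply/nAc/adjA; exact: (@ideal_adjoin_elem _ A c).
by split=> // n Gxn; apply: noxn; exists n.
Qed.

Lemma maximal_avoiding_ideal_prime : is_prime_ideal A.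
Proof.
have [_ _ _ _ Ax] := avoidA.
split; first exact: maximal_avoiding_ideal_ideal.
  by rewrite -(expr0 x); apply: Ax.
move=> a b hab; apply: contrapT => /not_orP[nAa nAb].
have [m hm] := ideal_adjoin_meets_powers nAa.
have [n hn] := ideal_adjoin_meets_powers nAb.
apply: (Ax (m + n)%N); rewrite exprD.
exact: mul_ideal_adjoin maximal_avoiding_ideal_ideal hab _ _ hm hn.
Qed.

End AvoidingIdeal.

Section Radicals.
Variable R : pzRingType.

Lemma prime_ideal_avoiding (x : R) :
  ~ nilpotent_elt x -> exists P, is_prime_ideal P /\ ~ P x.
Proof.
move=> x_nnil; have [A [avoidA maxA]] := ex_maximal_avoiding_ideal x.
exists A; split; first exact: maximal_avoiding_ideal_prime avoidA maxA x_nnil.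
by have [_ _ _ _ /(_ 1%N)] := avoidA; rewrite expr1.
Qed.

Lemma prime_radical_nilpotent (x : R) : prime_radical x -> nilpotent_elt x.
Proof.
move=> radx; apply: contrapT => /prime_ideal_avoiding[P [primeP nPx]].
exact: nPx (radx P primeP).
Qed.

Lemma prime_radical_ideal : is_ideal (@prime_radical R).
Proof.
split=> [P [[]] //|u v hu hv|u hu|r u hu|r u hu] P hP;
  case: (hP) => [[_ hD hN hL hR] _ _].
- exact: hD (hu _ hP) (hv _ hP).
- exact: hN (hu _ hP).
- exact: hL (hu _ hP).
- exact: hR (hu _ hP).
Qed.

Lemma nilpotent_envelope_zero (x : R) : nilpotent_elt x -> envelope_zero x.
Proof. by case=> n xn0; exists x, 1; split; [rewrite mulr1|exists n; rewrite mulr1]. Qed.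

End Radicals.

Section CompletelySemiprime.
Variables (R : pzRingType) (I : set R).

Definition completely_semiprime : Prop := forall y, I (y ^+ 2) -> I y.

Hypotheses (idealI : is_ideal I) (csI : completely_semiprime).

Lemma completely_semiprime_mulC u v : I (u * v) -> I (v * u).
Proof.
case: idealI => _ _ _ IL IR Iuv; apply: csI.
by rewrite expr2 mulrA -(mulrA v); apply: IR; apply: IL.
Qed.

Lemma completely_semiprime_expr_mul a b j :
  I (a ^+ j.+2 * b) -> I (a ^+ j.+1 * b).
Proof.
case: idealI => _ _ _ _ IR Iab; set c := a ^+ j.+1 * b.
have Ica : I (c * a) by apply: completely_semiprime_mulC; rewrite mulrA -exprS.
apply: csI; have -> : c ^+ 2 = (c * a) * (a ^+ j * b) by rewrite expr2 /c exprS !mulrA.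
exact: IR.
Qed.

Lemma completely_semiprime_envelope_zero x : envelope_zero x -> I x.
Proof.
have [I0 _ _ IL _] := idealI.
move=> [a [b [-> [[|k] abk0]]]]; first by move: abk0; rewrite mul1r => ->; apply: IL.
have : I (a ^+ k.+1 * b) by rewrite abk0.
elim: k {abk0} => [|k IHk] Iab; first by rewrite expr1 in Iab.
exact: IHk (completely_semiprime_expr_mul Iab).
Qed.

End CompletelySemiprime.

Lemma two_primal_completely_semiprime (R : pzRingType) :
  two_primal R -> completely_semiprime (@prime_radical R).
Proof.
move=> R2p y /R2p[n y2n0]; apply/R2p.
by exists (2 * n)%N; rewrite exprM.
Qed.

Theorem theorem4p4 (R : pzRingType) :
  two_primal R <-> (forall x : R, prime_radical x <-> envelope_zero x).
Proof.
split=> [R2p x|radE x].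
- split=> [/prime_radical_nilpotent/nilpotent_envelope_zero //|].
  apply: completely_semiprime_envelope_zero; first exact: prime_radical_ideal.
  exact: two_primal_completely_semiprime.
- split; last exact: prime_radical_nilpotent.
  by move=> /nilpotent_envelope_zero/radE.
Qed.
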